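(* With the notation of the context, for every $\rho\in(-1,1)$, $$e^{-\frac{\eta^2T}{2}}\le\frac{1+\frac{w(\rho)}{2}}{e^{\frac{\eta^2T}{2}}+\frac{w(\rho)}{2}}\le\frac{D}{p}\le1,$$ $$1\le\frac{G}{p}\le1+\frac{w(\rho)e_2}{2\eta^2T+\eta^2Tw(\rho)}\le1+\frac{e_2}{\eta^2T},$$ where $e_2=e^{2\eta^2T}-2(1+\eta^2T)e^{\frac{\eta^2T}{2}}+\eta^2T+1$.
   Context: Fix $T>0$, $r,\nu,\mu\in\mathbb R$, $\eta>0$, $\sigma>0$, $\rho\in(-1,1)$, $s_0>0$, $\lambda>0$, $\gamma>0$; $N$ is a standard Gaussian random variable; $W$ is the Lambert function (inverse of $x\in(-1,\infty)\mapsto xe^x$). Let $\theta(\rho)=\lambda\gamma(1-\rho^2)$, $w(\rho)=W\left(s_0\eta^2Te^{(\nu-\eta\rho\frac{\mu-r}{\sigma}-\frac{\eta^2}{2})T}\theta(\rho)\right)$, $$D=\frac{\lambda e^{-rT}}{\theta(\rho)\eta^2T}w(\rho)\left(1+\frac{w(\rho)}2\right),\qquad G=\frac{\lambda e^{-rT}}{\theta(\rho)}\frac{w(\rho)}{\eta^2T}\left(e^{\frac{\eta^2}{2}T}+\frac{w(\rho)}2\right),$$ and let $p$ be the asking reservation price of $\lambda$ units of the non-traded stock, $$p=-\frac{e^{-rT}}{\gamma(1-\rho^2)}\ln\mathbb E\exp\left(-\theta(\rho)s_0e^{(\nu-\eta\rho\frac{\mu-r}{\sigma}-\frac{\eta^2}{2})T}e^{\eta\sqrt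 TN}\right).$$ *)

From Stdlib Require Import Reals ClassicalEpsilon.
From Coquelicot Require Import Coquelicot.
Open Scope R_scope.

(* Lambert function W: inverse of x in (-1,oo) |-> x e^x.
   Chosen by Hilbert epsilon; for y >= -1/e it is the unique such x. *)
Definition LambertW (y : R) : R :=
  epsilon (inhabits 0) (fun x => -1 < x /\ x * exp x = y).

Definition gauss_density (x : R) : R := exp (- x ^ 2 / 2) / sqrt (2 * PI).

Definition gauss_expect (g : R -> R) : R :=
  RInt_gen (fun x => g x * gauss_density x)
    (Rbar_locally m_infty) (Rbar_locally p_infty).

Definition theta (lam gam rho : R) : R := lam * gam * (1 - rho ^ 2).

Definition drift (nu eta rho mu r sigma : R) : R :=
  nu - eta * rho * ((mu - r) / sigma) - eta ^ 2 / 2.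

Definition wfun (T r nu mu eta sigma rho s0 lam gam : R) : R :=
  LambertW (s0 * eta ^ 2 * T * exp (drift nu eta rho mu r sigma * T)
            * theta lam gam rho).

Definition Dval (T r nu mu eta sigma rho s0 lam gam : R) : R :=
  let w := wfun T r nu mu eta sigma rho s0 lam gam in
  lam * exp (- r * T) / (theta lam gam rho * eta ^ 2 * T) * w * (1 + w / 2).

Definition Gval (T r nu mu eta sigma rho s0 lam gam : R) : R :=
  let w := wfun T r nu mu eta sigma rho s0 lam gam in
  lam * exp (- r * T) / theta lam gam rho * (w / (eta ^ 2 * T))
    * (exp (eta ^ 2 / 2 * T) + w / 2).

(* asking reservation price of lam units of the non-traded stock *)
Definition pval (T r nu mu eta sigma rho s0 lam gam : R) : R :=
  - exp (- r * T) / (gam * (1 - rho ^ 2))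
    * ln (gauss_expect (fun n =>
        exp (- theta lam gam rho * s0 * exp (drift nu eta rho mu r sigma * T)
             * exp (eta * sqrt T * n)))).

Definition e2 (eta T : R) : R :=
  exp (2 * eta ^ 2 * T) - 2 * (1 + eta ^ 2 * T) * exp (eta ^ 2 * T / 2)
  + eta ^ 2 * T + 1.

From Stdlib Require Import Reals Psatz ClassicalEpsilon.
From Coquelicot Require Import Coquelicot.
Open Scope R_scope.

(* Put [v = eta^2 T], [sg = eta sqrt T], [a = theta s0 e^(drift T)] and let [E] be the
   expectation of [exp (- a e^(sg N))], so that [p = - (lam e^(-rT) / theta) ln E].  The
   Lambert equation [w e^w = a v] says [a = c e^(c v)] for [c = w / v], hence
   [a e^(sg N) = c e^y] with [y = sg N + c v].  Writing [e^y = 1 + y + R y] with [R y >= 0],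
   [E] is the integral of [e^(-c R y)] against the weight [e^(-c (1 + y))], of mass
   [e^(-c (1 + w/2))], under which [y] is centred normal with variance [v]; every moment of
   [e^y] and [R y] needed is then an explicit Gaussian integral.  Bounding [e^(-c R y)]
   above by [1], below by its tangent at the tilted mean [c (e^(v/2) - 1)] of [c R y]
   (Jensen), and above by [1 - c R y + (c R y)^2 / 2] gives
   [c (1 + w/2) <= - ln E <= c (e^(v/2) + w/2) <= - ln E + c^2 e2 / 2],
   where [e2] is the tilted second moment of [R y]; the ratio bounds are algebra. *)

Local Notation is_RInt_R f l :=
  (is_RInt_gen f (Rbar_locally m_infty) (Rbar_locally p_infty) l).

Ltac unify_exp_args :=
  repeat match goal with
  | |- context [exp ?A] => match goal with
    | |- context [exp ?B] =>
        assert_fails (constr_eq A B); replace A with B by (field || ring)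
    end
  end.

Lemma exp_le_compat x y : x <= y -> exp x <= exp y.
Proof. intros [H|H]; [left; apply exp_increasing, H|right; rewrite H; reflexivity]. Qed.

Lemma ln_le_sub_1 u : 0 < u -> ln u <= u - 1.
Proof. intro Hu. pose proof (exp_ineq1_le (ln u)). rewrite exp_ln in H; lra. Qed.

Lemma continuous_of_ex_derive (f : R -> R) x : ex_derive f x -> continuous f x.
Proof. apply (@ex_derive_continuous R_AbsRing R_NormedModule). Qed.

Lemma ex_RInt_of_continuous (f : R -> R) a b :
  (forall x, continuous f x) -> ex_RInt f a b.
Proof. intro Hf. apply (@ex_RInt_continuous R_CompleteNormedModule); auto. Qed.

Lemma RInt_0_sub (f : R -> R) u v :
  (forall x, continuous f x) -> RInt f 0 v - RInt f 0 u = RInt f u v.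
Proof.
intro Hf. rewrite <- (@RInt_Chasles R_CompleteNormedModule f 0 u v);
  try apply ex_RInt_of_continuous, Hf.
simpl. unfold plus; simpl. ring.
Qed.

Lemma derive_0_const (f : R -> R) x :
  (forall y, is_derive f y 0) -> f x = f 0.
Proof.
intro Hf.
assert (H : is_RInt (fun _ => 0) 0 x (minus (f x) (f 0))).
{ apply (@is_RInt_derive R_CompleteNormedModule); intros; [apply Hf|apply continuous_const]. }
apply (@is_RInt_unique R_CompleteNormedModule) in H.
rewrite (@RInt_const R_CompleteNormedModule) in H.
unfold minus, plus, opp, scal in H; simpl in H; unfold mult in H; simpl in H. lra.
Qed.

Lemma is_lim_sqrt_comp (g : R -> R) (x : Rbar) (l : R) :
  0 <= l -> is_lim g x l -> is_lim (fun y => sqrt (g y)) x (sqrt l).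
Proof.
intros Hl Hg. apply (filterlim_comp _ _ _ g sqrt _ (locally l)); [exact Hg|].
apply continuity_pt_filterlim, continuity_pt_sqrt, Hl.
Qed.

Lemma is_lim_comp_shift (f : R -> R) (x l : Rbar) s :
  x = p_infty \/ x = m_infty -> is_lim f x l -> is_lim (fun y => f (y - s)) x l.
Proof.
intros Hx Hf. apply (is_lim_comp f (fun y => y - s) x l x); [exact Hf| |].
- eapply is_lim_plus; [apply is_lim_id | apply is_lim_const |].
  destruct Hx as [-> | ->]; reflexivity.
- destruct Hx as [-> | ->]; apply filter_forall; discriminate.
Qed.

Lemma is_lim_infty_0 (f : R -> R) :
  (forall eps, 0 < eps -> exists M, forall x, M < Rabs x -> Rabs (f x) < eps) ->
  is_lim f p_infty 0 /\ is_lim f m_infty 0.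
Proof.
intro Hf. split; apply is_lim_spec; intro eps;
  destruct (Hf eps (cond_pos eps)) as [M HM];
  pose proof (Rle_abs M); pose proof (Rabs_pos M).
- exists (Rabs M). intros x Hx. rewrite Rminus_0_r. apply HM.
  rewrite Rabs_right; lra.
- exists (- Rabs M). intros x Hx. rewrite Rminus_0_r. apply HM.
  rewrite Rabs_left; lra.
Qed.

Lemma ex_is_lim_of_dominated_increments (f g : R -> R) (x : Rbar) (l : R) :
  (forall u v, Rabs (f v - f u) <= Rabs (g v - g u)) ->
  is_lim g x l -> exists l' : R, is_lim f x l'.
Proof.
intros Hfg Hg.
apply (Hierarchy.filterlim_locally_cauchy (F := Rbar_locally' x) f).
intro eps. exists (fun y => Rabs (g y - l) < eps / 2). split.
- exact (proj2 (is_lim_spec g x l) Hg (pos_div_2 eps)).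
- intros u v Hu Hv. change (Rabs (f v - f u) < eps).
  apply (Rle_lt_trans _ _ _ (Hfg u v)).
  replace (g v - g u) with ((g v - l) - (g u - l)) by ring.
  apply (Rle_lt_trans _ _ _ (Rabs_triang _ _)). rewrite Rabs_Ropp. lra.
Qed.

Lemma div_le_div_cross a b c d : 0 < b -> 0 < d -> a * d <= c * b -> a / b <= c / d.
Proof.
intros Hb Hd H. apply (Rmult_le_reg_r (b * d)); [nra|].
replace (a / b * (b * d)) with (a * d) by (field; lra).
replace (c / d * (b * d)) with (c * b) by (field; lra). exact H.
Qed.

Lemma div_le_1 a b : 0 < b -> a <= b -> a / b <= 1.
Proof. intros. replace 1 with (1 / 1) by field. apply div_le_div_cross; lra. Qed.

Lemma one_le_div a b : 0 < b -> b <= a -> 1 <= a / b.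
Proof. intros. replace 1 with (1 / 1) by field. apply div_le_div_cross; lra. Qed.

Lemma is_RInt_R_of_derive (F f : R -> R) (la lb : R) :
  (forall x, is_derive F x (f x)) -> (forall x, continuous f x) ->
  is_lim F m_infty la -> is_lim F p_infty lb -> is_RInt_R f (lb - la).
Proof.
intros HF Hf Hla Hlb. apply (is_RInt_gen_ext (Derive F)).
- apply filter_forall. intros ab x _. apply is_derive_unique, HF.
- apply is_RInt_gen_Derive; [| |exact Hla|exact Hlb];
    apply filter_forall; intros ab x _.
  + eexists. apply HF.
  + apply (continuous_ext f); [|apply Hf].
    intro y. symmetry. apply is_derive_unique, HF.
Qed.

Lemma is_RInt_R_ext (f g : R -> R) (l l' : R) :
  (forall x, f x = g x) -> l = l' -> is_RInt_R f l -> is_RInt_R g l'.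
Proof.
intros Hfg <-. apply is_RInt_gen_ext, filter_forall. intros ab x _. apply Hfg.
Qed.

Lemma is_RInt_R_scal (f : R -> R) k l :
  is_RInt_R f l -> is_RInt_R (fun x => k * f x) (k * l).
Proof. exact (is_RInt_gen_scal f k l). Qed.

Lemma is_RInt_R_lin (f g : R -> R) a b lf lg :
  is_RInt_R f lf -> is_RInt_R g lg ->
  is_RInt_R (fun x => a * f x + b * g x) (a * lf + b * lg).
Proof.
intros Hf Hg.
exact (is_RInt_gen_plus _ _ _ _ (is_RInt_R_scal _ a _ Hf) (is_RInt_R_scal _ b _ Hg)).
Qed.

Lemma is_RInt_R_ge0 (f : R -> R) l : (forall x, 0 <= f x) -> is_RInt_R f l -> 0 <= l.
Proof.
intros Hf Hl.
assert (H : Rabs l <= l).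
{ apply (RInt_gen_norm f f l l); [| |exact Hl|exact Hl].
  - exists (fun a => a < 0) (fun b => 0 < b); [exists 0; auto|exists 0; auto|].
    intros a b Ha Hb. simpl. lra.
  - apply filter_forall. intros ab x _. unfold norm; simpl. unfold abs; simpl.
    rewrite Rabs_right; [lra|apply Rle_ge, Hf]. }
pose proof (Rabs_pos l). lra.
Qed.

Lemma is_RInt_R_le (f g : R -> R) lf lg :
  (forall x, f x <= g x) -> is_RInt_R f lf -> is_RInt_R g lg -> lf <= lg.
Proof.
intros Hfg Hf Hg.
assert (H := is_RInt_R_lin g f 1 (-1) lg lf Hg Hf).
apply is_RInt_R_ge0 in H; [lra|]. intro x. specialize (Hfg x). lra.
Qed.

(** * The Gaussian integral *)

Definition gauss_kernel (x : R) : R := exp (- x ^ 2 / 2).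

Lemma gauss_kernel_pos x : 0 < gauss_kernel x.
Proof. apply exp_pos. Qed.

Lemma continuous_gauss_kernel x : continuous gauss_kernel x.
Proof. apply continuous_of_ex_derive. unfold gauss_kernel. auto_derive. exact I. Qed.

Lemma is_derive_gauss_kernel (x : R) : is_derive gauss_kernel x (- x * gauss_kernel x).
Proof. unfold gauss_kernel. auto_derive; [exact I|]. unify_exp_args. field. Qed.

Lemma gauss_kernel_tail eps : 0 < eps ->
  exists M, forall x, M < Rabs x -> Rabs x * gauss_kernel x < eps /\ gauss_kernel x < eps.
Proof.
intro He. exists (2 / eps + 1). intros x Hx.
assert (H2 : 0 < 2 / eps) by (apply Rdiv_lt_0_compat; lra).
assert (Hx2 : x ^ 2 = Rabs x * Rabs x) by (rewrite <- Rabs_mult, Rabs_right; nra).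
assert (Hk : gauss_kernel x * (1 + x ^ 2 / 2) <= 1).
{ unfold gauss_kernel. replace (- x ^ 2 / 2) with (- (x ^ 2 / 2)) by field.
  rewrite exp_Ropp. pose proof (exp_ineq1_le (x ^ 2 / 2)). pose proof (exp_pos (x ^ 2 / 2)).
  apply (Rmult_le_reg_l (exp (x ^ 2 / 2))); auto. field_simplify; lra. }
pose proof (gauss_kernel_pos x).
assert (Hxk : Rabs x * gauss_kernel x * Rabs x <= 2) by (rewrite Hx2 in Hk; nra).
assert (2 < eps * Rabs x) by (replace 2 with (2 / eps * eps) by (field; lra); nra).
split; nra.
Qed.

Lemma is_lim_gauss_kernel :
  is_lim gauss_kernel p_infty 0 /\ is_lim gauss_kernel m_infty 0.
Proof.
apply is_lim_infty_0. intros eps He. destruct (gauss_kernel_tail eps He) as [M HM].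
exists M. intros x Hx. rewrite Rabs_right; [apply HM, Hx|].
left; apply gauss_kernel_pos.
Qed.

Lemma is_lim_id_mul_gauss_kernel :
  is_lim (fun x => x * gauss_kernel x) p_infty 0 /\
  is_lim (fun x => x * gauss_kernel x) m_infty 0.
Proof.
apply is_lim_infty_0. intros eps He. destruct (gauss_kernel_tail eps He) as [M HM].
exists M. intros x Hx. rewrite Rabs_mult, (Rabs_right (gauss_kernel x)); [apply HM, Hx|].
left; apply gauss_kernel_pos.
Qed.

Definition gauss_prim (x : R) : R := RInt gauss_kernel 0 x.

Lemma is_derive_gauss_prim x : is_derive gauss_prim x (gauss_kernel x).
Proof.
apply (is_derive_RInt gauss_kernel gauss_prim 0 x); [|apply continuous_gauss_kernel].
apply filter_forall. intro b. apply (@RInt_correct R_CompleteNormedModule).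
apply ex_RInt_of_continuous, continuous_gauss_kernel.
Qed.

Lemma gauss_prim_nonneg x : 0 <= x -> 0 <= gauss_prim x.
Proof.
intro Hx. apply RInt_ge_0; [exact Hx| |intros; apply Rlt_le, gauss_kernel_pos].
apply ex_RInt_of_continuous, continuous_gauss_kernel.
Qed.

Lemma gauss_prim_nonpos x : x <= 0 -> gauss_prim x <= 0.
Proof.
intro Hx. assert (Hint := ex_RInt_of_continuous _ x 0 continuous_gauss_kernel).
assert (0 <= RInt gauss_kernel x 0)
  by (apply RInt_ge_0; [exact Hx|exact Hint|intros; apply Rlt_le, gauss_kernel_pos]).
unfold gauss_prim. rewrite <- (@opp_RInt_swap R_CompleteNormedModule); [|exact Hint].
simpl. unfold opp; simpl. lra.
Qed.

Definition gauss_aux_integrand (x t : R) : R :=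
  exp (- (x ^ 2 * (1 + t ^ 2)) / 2) / (1 + t ^ 2).

Definition gauss_aux (x : R) : R := RInt (gauss_aux_integrand x) 0 1.

Lemma is_derive_gauss_aux_integrand x t :
  is_derive (fun z => gauss_aux_integrand z t) x
    (- x * exp (- (x ^ 2 * (1 + t ^ 2)) / 2)).
Proof.
unfold gauss_aux_integrand. auto_derive; [exact I|].
unify_exp_args. field. nra.
Qed.

Lemma continuous_gauss_aux_integrand x t : continuous (gauss_aux_integrand x) t.
Proof. apply continuous_of_ex_derive. unfold gauss_aux_integrand. auto_derive. nra. Qed.

Lemma continuity_2d_pt_gauss_aux_deriv x t :
  continuity_2d_pt (fun u v => Derive (fun z => gauss_aux_integrand z v) u) x t.
Proof.
apply continuity_2d_pt_ext
  with (f := fun u v => - u * exp (- / 2 * (u * u * (1 + v * v)))).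
{ intros u v. symmetry. apply is_derive_unique.
  replace (- / 2 * (u * u * (1 + v * v))) with (- (u ^ 2 * (1 + v ^ 2)) / 2) by field.
  apply is_derive_gauss_aux_integrand. }
apply continuity_2d_pt_mult.
- apply continuity_2d_pt_opp, continuity_2d_pt_id1.
- apply continuity_1d_2d_pt_comp
    with (f := exp) (g := fun u v => - / 2 * (u * u * (1 + v * v))).
  + apply derivable_continuous_pt, derivable_pt_exp.
  + repeat first [ apply continuity_2d_pt_mult | apply continuity_2d_pt_plus
                 | apply continuity_2d_pt_const | apply continuity_2d_pt_id1
                 | apply continuity_2d_pt_id2 ].
Qed.

(* The [t]-integral of the [x]-derivative is [- gauss_kernel x] times the substituted
   integral [RInt (fun t => x * gauss_kernel (x * t)) 0 1 = gauss_prim x]. *)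
Lemma is_derive_gauss_aux x :
  is_derive gauss_aux x (- gauss_kernel x * gauss_prim x).
Proof.
replace (- gauss_kernel x * gauss_prim x)
  with (RInt (fun t => Derive (fun u => gauss_aux_integrand u t) x) 0 1).
{ apply is_derive_RInt_param.
  - apply filter_forall. intros y t _. eexists. apply is_derive_gauss_aux_integrand.
  - intros t _. apply continuity_2d_pt_gauss_aux_deriv.
  - apply filter_forall. intro y. apply ex_RInt_of_continuous.
    apply continuous_gauss_aux_integrand. }
rewrite (RInt_ext _ (fun t => scal (- gauss_kernel x) (scal x (gauss_kernel (x * t + 0))))).
- rewrite (@RInt_scal R_CompleteNormedModule), (@RInt_comp_lin R_CompleteNormedModule).
  + rewrite Rmult_0_r, Rplus_0_r, Rmult_1_r, Rplus_0_r. reflexivity.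
  + apply ex_RInt_of_continuous, continuous_gauss_kernel.
  + apply ex_RInt_of_continuous. intro t.
    apply continuous_of_ex_derive. unfold scal; simpl; unfold mult; simpl.
    unfold gauss_kernel. auto_derive. exact I.
- intros t _.
  replace (Derive (fun u => gauss_aux_integrand u t) x)
    with (- x * exp (- (x ^ 2 * (1 + t ^ 2)) / 2))
    by (symmetry; apply is_derive_unique, is_derive_gauss_aux_integrand).
  unfold gauss_kernel.
  replace (- (x ^ 2 * (1 + t ^ 2)) / 2) with (- x ^ 2 / 2 + - (x * t + 0) ^ 2 / 2)
    by field.
  rewrite exp_plus. unfold scal; simpl; unfold mult; simpl. ring.
Qed.

Lemma gauss_aux_0 : gauss_aux 0 = PI / 4.
Proof.
assert (Hatan : forall t, is_derive atan t (/ (1 + t ^ 2)))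
  by (intro t; apply is_derive_Reals, derivable_pt_lim_atan).
unfold gauss_aux.
rewrite (RInt_ext _ (Derive atan)).
- rewrite RInt_Derive, atan_1, atan_0; [lra| |]; intros t _.
  + eexists. apply Hatan.
  + apply (continuous_ext (fun t => / (1 + t ^ 2))).
    * intro u. symmetry. apply is_derive_unique, Hatan.
    * apply continuous_of_ex_derive. auto_derive. nra.
- intros t _. rewrite (is_derive_unique _ _ _ (Hatan t)).
  unfold gauss_aux_integrand. replace (- (0 ^ 2 * (1 + t ^ 2)) / 2) with 0 by field.
  rewrite exp_0. apply Rmult_1_l.
Qed.

Lemma gauss_prim_sqr_add x : gauss_prim x ^ 2 + 2 * gauss_aux x = PI / 2.
Proof.
rewrite (derive_0_const (fun x => gauss_prim x ^ 2 + 2 * gauss_aux x)).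
- replace (gauss_prim 0) with 0 by (symmetry; apply (@RInt_point R_CompleteNormedModule)).
  rewrite gauss_aux_0. field.
- intro y. apply is_derive_Reals.
  replace 0 with (INR 2 * gauss_prim y ^ 1 * gauss_kernel y
                  + 2 * (- gauss_kernel y * gauss_prim y)) by (simpl; ring).
  apply derivable_pt_lim_plus.
  + apply (derivable_pt_lim_comp gauss_prim (fun z => z ^ 2)).
    * apply is_derive_Reals, is_derive_gauss_prim.
    * apply derivable_pt_lim_pow.
  + apply derivable_pt_lim_scal, is_derive_Reals, is_derive_gauss_aux.
Qed.

Lemma gauss_aux_bounds x : 0 <= gauss_aux x <= gauss_kernel x.
Proof.
assert (Hint : ex_RInt (gauss_aux_integrand x) 0 1)
  by (apply ex_RInt_of_continuous, continuous_gauss_aux_integrand).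
assert (Hpt : forall t, 0 <= gauss_aux_integrand x t <= gauss_kernel x).
{ intro t. unfold gauss_aux_integrand, gauss_kernel.
  pose proof (exp_pos (- (x ^ 2 * (1 + t ^ 2)) / 2)).
  assert (exp (- (x ^ 2 * (1 + t ^ 2)) / 2) <= exp (- x ^ 2 / 2))
    by (apply exp_le_compat; nra).
  split; [apply Rlt_le, Rdiv_lt_0_compat; nra|].
  apply (Rle_trans _ (exp (- (x ^ 2 * (1 + t ^ 2)) / 2))); [|lra].
  apply (Rmult_le_reg_r (1 + t ^ 2)); [nra|].
  unfold Rdiv. rewrite Rmult_assoc, Rinv_l by nra. nra. }
split; unfold gauss_aux.
- apply RInt_ge_0; [lra|exact Hint|]. intros; apply Hpt.
- replace (gauss_kernel x) with (RInt (fun _ => gauss_kernel x) 0 1).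
  + apply RInt_le; [lra|exact Hint|apply ex_RInt_const|]. intros; apply Hpt.
  + rewrite (@RInt_const R_CompleteNormedModule).
    unfold scal; simpl; unfold mult; simpl. ring.
Qed.

Lemma is_lim_gauss_aux : is_lim gauss_aux p_infty 0 /\ is_lim gauss_aux m_infty 0.
Proof.
destruct is_lim_gauss_kernel as [Hp Hm].
split; (apply (is_lim_le_le_loc (fun _ => 0) gauss_kernel);
        [apply filter_forall; apply gauss_aux_bounds | apply is_lim_const | assumption]).
Qed.

Lemma is_lim_gauss_prim :
  is_lim gauss_prim p_infty (sqrt (PI / 2)) /\
  is_lim gauss_prim m_infty (- sqrt (PI / 2)).
Proof.
pose proof PI_RGT_0.
assert (Hsqrt : forall x, is_lim gauss_aux x 0 ->
          is_lim (fun y => sqrt (PI / 2 - 2 * gauss_aux y)) x (sqrt (PI / 2))).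
{ intros x Hx. apply is_lim_sqrt_comp; [lra|].
  assert (H2 : is_lim (fun y => PI / 2 - 2 * gauss_aux y) x (PI / 2 - 2 * 0))
    by (apply is_lim_minus'; [apply is_lim_const | apply (is_lim_scal_l _ 2 _ 0), Hx]).
  rewrite Rmult_0_r, Rminus_0_r in H2. exact H2. }
assert (Hsq : forall y, gauss_prim y ^ 2 = PI / 2 - 2 * gauss_aux y)
  by (intro y; rewrite <- (gauss_prim_sqr_add y); ring).
destruct is_lim_gauss_aux as [Hp Hm]. split.
- apply (is_lim_ext_loc (fun y => sqrt (PI / 2 - 2 * gauss_aux y))); [|apply Hsqrt, Hp].
  exists 0. intros y Hy. rewrite <- Hsq. apply sqrt_pow2, gauss_prim_nonneg. lra.
- apply (is_lim_ext_loc (fun y => - sqrt (PI / 2 - 2 * gauss_aux y))).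
  + exists 0. intros y Hy. rewrite <- Hsq.
    replace (gauss_prim y ^ 2) with ((- gauss_prim y) ^ 2) by ring.
    rewrite sqrt_pow2; [ring|]. pose proof (gauss_prim_nonpos y). lra.
  + apply (is_lim_opp _ _ (sqrt (PI / 2))), Hsqrt, Hm.
Qed.

Lemma sqrt_2PI : sqrt (2 * PI) = 2 * sqrt (PI / 2).
Proof.
replace (2 * PI) with (2 ^ 2 * (PI / 2)) by field.
rewrite sqrt_mult_alt, sqrt_pow2; lra || (pose proof PI_RGT_0; nra).
Qed.

(** * Gaussian moments *)

Lemma is_RInt_R_gauss_kernel_quadratic a b c s :
  is_RInt_R (fun x => (a + b * (x - s) + c * (x - s) ^ 2) * gauss_kernel (x - s))
    ((a + c) * sqrt (2 * PI)).
Proof.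
set (F := fun x => (a + c) * gauss_prim (x - s) - (b + c * (x - s)) * gauss_kernel (x - s)).
assert (Hlim : forall x (l : R), x = p_infty \/ x = m_infty ->
          is_lim gauss_prim x l -> is_lim F x ((a + c) * l)).
{ intros x l Hx Hl.
  assert (Hk : is_lim gauss_kernel x 0 /\ is_lim (fun u => u * gauss_kernel u) x 0)
    by (destruct is_lim_gauss_kernel, is_lim_id_mul_gauss_kernel;
        destruct Hx as [-> | ->]; split; assumption).
  destruct Hk as [Hk Hxk].
  assert (H := is_lim_minus' _ _ x _ _
    (is_lim_scal_l _ (a + c) x l (is_lim_comp_shift _ _ _ s Hx Hl))
    (is_lim_plus' _ _ x _ _ (is_lim_scal_l _ b x 0 (is_lim_comp_shift _ _ _ s Hx Hk))
                            (is_lim_scal_l _ c x 0 (is_lim_comp_shift _ _ _ s Hx Hxk)))).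
  simpl in H. rewrite !Rmult_0_r, Rplus_0_r, Rminus_0_r in H.
  refine (is_lim_ext _ F _ _ _ H). intro y. unfold F. ring. }
destruct is_lim_gauss_prim as [Hp Hm].
replace ((a + c) * sqrt (2 * PI))
  with ((a + c) * sqrt (PI / 2) - (a + c) * (- sqrt (PI / 2))) by (rewrite sqrt_2PI; ring).
apply (is_RInt_R_of_derive F).
- intro x. unfold F. auto_derive.
  + split; [|split; [|exact I]]; eexists;
      [apply is_derive_gauss_prim | apply is_derive_gauss_kernel].
  + rewrite (is_derive_unique _ _ _ (is_derive_gauss_prim _)),
            (is_derive_unique _ _ _ (is_derive_gauss_kernel _)).
    unfold Rminus. ring.
- intro x. apply continuous_of_ex_derive. auto_derive.
  eexists. apply is_derive_gauss_kernel.
- apply Hlim; [right|]; auto.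
- apply Hlim; [left|]; auto.
Qed.

Lemma ex_is_RInt_R_dominated (f : R -> R) :
  (forall x, continuous f x) -> (forall x, 0 <= f x <= gauss_kernel x) ->
  exists l, is_RInt_R f l.
Proof.
intros Hf Hdom. set (F x := RInt f 0 x).
assert (HF : forall x, is_derive F x (f x)).
{ intro x. apply (is_derive_RInt f F 0 x); [|apply Hf].
  apply filter_forall. intro b. apply (@RInt_correct R_CompleteNormedModule).
  apply ex_RInt_of_continuous, Hf. }
assert (Hincr : forall u v, u <= v -> 0 <= F v - F u <= gauss_prim v - gauss_prim u).
{ intros u v Huv. unfold F, gauss_prim.
  rewrite !RInt_0_sub by first [exact Hf | exact continuous_gauss_kernel].
  assert (Hint : ex_RInt f u v) by (apply ex_RInt_of_continuous, Hf).
  split.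
  - apply RInt_ge_0; [exact Huv|exact Hint|]. intros; apply Hdom.
  - apply RInt_le; [exact Huv|exact Hint| |intros; apply Hdom].
    apply ex_RInt_of_continuous, continuous_gauss_kernel. }
assert (Hinc : forall u v, Rabs (F v - F u) <= Rabs (gauss_prim v - gauss_prim u)).
{ intros u v. destruct (Rle_or_lt u v) as [Huv|Hvu].
  - destruct (Hincr u v Huv). rewrite !Rabs_right; lra.
  - rewrite (Rabs_minus_sym (F v)), (Rabs_minus_sym (gauss_prim v)).
    destruct (Hincr v u (Rlt_le _ _ Hvu)). rewrite !Rabs_right; lra. }
destruct is_lim_gauss_prim as [Hp Hm].
destruct (ex_is_lim_of_dominated_increments F _ _ _ Hinc Hm) as [la Hla].
destruct (ex_is_lim_of_dominated_increments F _ _ _ Hinc Hp) as [lb Hlb].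
exists (lb - la). exact (is_RInt_R_of_derive F f la lb HF Hf Hla Hlb).
Qed.

(* Under the weight [exp (j y - c (1 + y)) gauss_density] with [y = sg x + c v], [1 + y]
   is normal with mean [1 + j v] and variance [v]; the weight has mass
   [exp (- c (1 + c v / 2) + j^2 v / 2)]. *)
Lemma is_RInt_R_tilted_moment c sg v j p0 p1 p2 : sg ^ 2 = v ->
  is_RInt_R
    (fun x => (p0 + p1 * (1 + (sg * x + c * v)) + p2 * (1 + (sg * x + c * v)) ^ 2)
              * exp (j * (sg * x + c * v)) * exp (- c * (1 + (sg * x + c * v)))
              * gauss_density x)
    (exp (- c * (1 + c * v / 2)) * exp (j ^ 2 * v / 2)
     * (p0 + p1 * (1 + j * v) + p2 * ((1 + j * v) ^ 2 + v))).
Proof.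
intro Hv. set (s := (j - c) * sg). set (m := 1 + j * v).
set (C := exp (- c * (1 + c * v / 2)) * exp (j ^ 2 * v / 2) / sqrt (2 * PI)).
assert (Hsqrt : 0 < sqrt (2 * PI)) by (apply sqrt_lt_R0; pose proof PI_RGT_0; lra).
assert (H := is_RInt_R_scal _ C _ (is_RInt_R_gauss_kernel_quadratic
               (p0 + p1 * m + p2 * m ^ 2) ((p1 + 2 * p2 * m) * sg) (p2 * v) s)).
replace (C * ((p0 + p1 * m + p2 * m ^ 2 + p2 * v) * sqrt (2 * PI)))
  with (exp (- c * (1 + c * v / 2)) * exp (j ^ 2 * v / 2)
        * (p0 + p1 * (1 + j * v) + p2 * ((1 + j * v) ^ 2 + v))) in H
  by (unfold C, m; field; lra).
refine (is_RInt_R_ext _ _ _ _ _ eq_refl H).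
intro x. set (y := sg * x + c * v).
assert (Hpoly : p0 + p1 * (1 + y) + p2 * (1 + y) ^ 2
                = p0 + p1 * m + p2 * m ^ 2 + (p1 + 2 * p2 * m) * sg * (x - s)
                  + p2 * v * (x - s) ^ 2)
  by (unfold y, m, s; subst v; ring).
assert (Hexp : exp (j * y) * exp (- c * (1 + y)) * exp (- x ^ 2 / 2)
               = exp (- c * (1 + c * v / 2)) * exp (j ^ 2 * v / 2) * exp (- (x - s) ^ 2 / 2)).
{ rewrite <- !exp_plus. f_equal. unfold y, s. subst v. field. }
unfold gauss_density, gauss_kernel, C. rewrite Hpoly.
replace (exp (- (x - s) ^ 2 / 2)) with
  (exp (j * y) * exp (- c * (1 + y)) * exp (- x ^ 2 / 2)
   / (exp (- c * (1 + c * v / 2)) * exp (j ^ 2 * v / 2))).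
- field. split; [lra|]. split; apply Rgt_not_eq, exp_pos.
- rewrite Hexp. field. split; apply Rgt_not_eq, exp_pos.
Qed.

Lemma gauss_expect_of_is_RInt_R (g : R -> R) l :
  is_RInt_R (fun x => g x * gauss_density x) l -> gauss_expect g = l.
Proof.
apply (@is_RInt_gen_unique R_CompleteNormedModule _ _
         (Proper_StrongProper _ (Rbar_locally_filter _))
         (Proper_StrongProper _ (Rbar_locally_filter _))).
Qed.

(** * Bounds on the price integral *)

Definition exp_remainder (y : R) : R := exp y - 1 - y.

Lemma exp_remainder_ge0 y : 0 <= exp_remainder y.
Proof. unfold exp_remainder. pose proof (exp_ineq1_le y). lra. Qed.

Lemma exp_ge_tangent z z0 : exp z0 * (1 + z - z0) <= exp z.
Proof.
replace (exp z) with (exp z0 * exp (z - z0)) by (rewrite <- exp_plus; f_equal; ring).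
apply Rmult_le_compat_l; [apply Rlt_le, exp_pos|].
pose proof (exp_ineq1_le (z - z0)). lra.
Qed.

Lemma exp_neg_le_taylor2 z : 0 <= z -> exp (- z) <= 1 - z + z ^ 2 / 2.
Proof.
intro Hz. set (h t := 1 - t + t ^ 2 / 2 - exp (- t)).
assert (H : is_RInt (fun t => -1 + t + exp (- t)) 0 z (minus (h z) (h 0))).
{ apply (@is_RInt_derive R_CompleteNormedModule); intros t _.
  - unfold h. auto_derive; [exact I|]. lra.
  - apply continuous_of_ex_derive. auto_derive. exact I. }
apply (is_RInt_ge_0 _ 0 z) in H; [|exact Hz|].
- unfold minus, plus, opp, h in H; simpl in H. rewrite Ropp_0, exp_0 in H. lra.
- intros t _. pose proof (exp_ineq1_le (- t)). lra.
Qed.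

Section TiltedPriceIntegral.

Variables eta T c : R.
Hypotheses (hT : 0 < T) (hc : 0 < c).

Local Notation v := (eta ^ 2 * T).
Local Notation sg := (eta * sqrt T).
Local Notation y x := (eta * sqrt T * x + c * (eta ^ 2 * T)).
Local Notation A := (exp (- c * (1 + c * (eta ^ 2 * T) / 2))).

Lemma sg_sqr : sg ^ 2 = v.
Proof. rewrite Rpow_mult_distr, pow2_sqrt; lra. Qed.

Lemma is_RInt_R_tilt0 :
  is_RInt_R (fun x => exp (- c * (1 + y x)) * gauss_density x) A.
Proof.
refine (is_RInt_R_ext _ _ _ _ _ _ (is_RInt_R_tilted_moment c sg v 0 1 0 0 sg_sqr)).
- intro x. rewrite !Rmult_0_l, exp_0. ring.
- replace (0 ^ 2 * v / 2) with 0 by field. rewrite exp_0. ring.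
Qed.

Lemma is_RInt_R_tilt1 :
  is_RInt_R (fun x => exp (- c * (1 + y x)) * exp_remainder (y x) * gauss_density x)
    (A * (exp (v / 2) - 1)).
Proof.
refine (is_RInt_R_ext _ _ _ _ _ _
  (is_RInt_R_lin _ _ 1 (-1) _ _ (is_RInt_R_tilted_moment c sg v 1 1 0 0 sg_sqr)
                                (is_RInt_R_tilted_moment c sg v 0 0 1 0 sg_sqr))).
- intro x. unfold exp_remainder. rewrite !Rmult_0_l, !Rmult_1_l, exp_0. ring.
- replace (1 ^ 2 * v / 2) with (v / 2) by field.
  replace (0 ^ 2 * v / 2) with 0 by field. rewrite exp_0. ring.
Qed.

Lemma is_RInt_R_tilt2 :
  is_RInt_R (fun x => exp (- c * (1 + y x)) * exp_remainder (y x) ^ 2 * gauss_density x)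
    (A * e2 eta T).
Proof.
refine (is_RInt_R_ext _ _ _ _ _ _
  (is_RInt_R_lin _ _ 1 1 _ _ (is_RInt_R_tilted_moment c sg v 2 1 0 0 sg_sqr)
     (is_RInt_R_lin _ _ (-2) 1 _ _ (is_RInt_R_tilted_moment c sg v 1 0 1 0 sg_sqr)
                                   (is_RInt_R_tilted_moment c sg v 0 0 0 1 sg_sqr)))).
- intro x. set (Y := y x). replace (2 * Y) with (Y + Y) by ring.
  unfold exp_remainder. rewrite exp_plus, !Rmult_0_l, !Rmult_1_l, exp_0. ring.
- replace (2 ^ 2 * v / 2) with (2 * eta ^ 2 * T) by field.
  replace (1 ^ 2 * v / 2) with (v / 2) by field.
  replace (0 ^ 2 * v / 2) with 0 by field. rewrite exp_0. unfold e2. ring.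
Qed.

Variable E : R.
Hypothesis hE :
  is_RInt_R (fun x => exp (- (c * exp (c * v)) * exp (sg * x)) * gauss_density x) E.

Lemma price_integrand_split x :
  exp (- (c * exp (c * v)) * exp (sg * x))
  = exp (- c * (1 + y x)) * exp (- c * exp_remainder (y x)).
Proof. rewrite <- exp_plus. f_equal. unfold exp_remainder. rewrite exp_plus. ring. Qed.

Lemma tilt_weight_pos x : 0 < exp (- c * (1 + y x)) * gauss_density x.
Proof.
apply Rmult_lt_0_compat; [apply exp_pos|].
apply Rdiv_lt_0_compat; [apply exp_pos|apply sqrt_lt_R0; pose proof PI_RGT_0; lra].
Qed.

Lemma price_integral_le : E <= A.
Proof.
refine (is_RInt_R_le _ _ _ _ _ hE is_RInt_R_tilt0). intro x. cbv beta.
rewrite price_integrand_split.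
pose proof (tilt_weight_pos x). pose proof (exp_remainder_ge0 (y x)).
assert (exp (- c * exp_remainder (y x)) <= 1)
  by (rewrite <- exp_0; apply exp_le_compat; nra).
nra.
Qed.

(* Jensen: the tangent of [exp] at minus [c] times the tilted mean [exp (v / 2) - 1]
   of [exp_remainder y]. *)
Lemma price_integral_ge : exp (- c * (exp (v / 2) + c * v / 2)) <= E.
Proof.
set (mu := exp (v / 2) - 1).
refine (Rle_trans _ _ _ _ (is_RInt_R_le _ _ _ _ _
  (is_RInt_R_lin _ _ (exp (- c * mu) * (1 + c * mu)) (- (exp (- c * mu) * c)) _ _
     is_RInt_R_tilt0 is_RInt_R_tilt1) hE)).
- right. replace (- c * (exp (v / 2) + c * v / 2)) with (- c * mu + - c * (1 + c * v / 2))
    by (unfold mu; ring).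
  rewrite exp_plus. unfold mu. ring.
- intro x. cbv beta. rewrite price_integrand_split.
  pose proof (tilt_weight_pos x).
  pose proof (exp_ge_tangent (- c * exp_remainder (y x)) (- c * mu)).
  nra.
Qed.

Lemma price_integral_le_taylor :
  E <= A * (1 - c * (exp (v / 2) - 1) + c ^ 2 / 2 * e2 eta T).
Proof.
refine (Rle_trans _ _ _ (is_RInt_R_le _ _ _ _ _ hE
  (is_RInt_R_lin _ _ 1 1 _ _ is_RInt_R_tilt0
     (is_RInt_R_lin _ _ (- c) (c ^ 2 / 2) _ _ is_RInt_R_tilt1 is_RInt_R_tilt2))) _).
- intro x. cbv beta. rewrite price_integrand_split.
  pose proof (tilt_weight_pos x). pose proof (exp_remainder_ge0 (y x)).
  pose proof (exp_neg_le_taylor2 (c * exp_remainder (y x))).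
  replace (- c * exp_remainder (y x)) with (- (c * exp_remainder (y x))) by ring.
  nra.
- right. field.
Qed.

Lemma neg_ln_price_integral_bounds :
  c * (1 + c * v / 2) <= - ln E /\
  - ln E <= c * (exp (v / 2) + c * v / 2) /\
  c * (exp (v / 2) + c * v / 2) - c ^ 2 / 2 * e2 eta T <= - ln E.
Proof.
pose proof price_integral_le as Hle. pose proof price_integral_ge as Hge.
pose proof price_integral_le_taylor as Htaylor.
assert (HE : 0 < E) by (eapply Rlt_le_trans; [apply exp_pos|exact Hge]).
set (Q := 1 - c * (exp (v / 2) - 1) + c ^ 2 / 2 * e2 eta T) in Htaylor.
assert (HQ : 0 < Q).
{ destruct (Rle_or_lt Q 0) as [HQ|HQ]; [|exact HQ].
  pose proof (exp_pos (- c * (1 + c * v / 2))). nra. }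
apply ln_le in Hle; [|exact HE]. apply ln_le in Hge; [|apply exp_pos].
apply ln_le in Htaylor; [|exact HE].
rewrite ln_exp in Hle, Hge. rewrite ln_mult, ln_exp in Htaylor by (apply exp_pos || exact HQ).
pose proof (ln_le_sub_1 Q HQ). unfold Q in *. split; [|split]; nra.
Qed.

End TiltedPriceIntegral.

Lemma e2_nonneg eta T : 0 < T -> 0 <= e2 eta T.
Proof.
intro hT. assert (H := is_RInt_R_tilt2 eta T 1 hT).
apply is_RInt_R_ge0 in H.
- apply (Rmult_le_reg_l (exp (- (1) * (1 + 1 * (eta ^ 2 * T) / 2)))); [apply exp_pos|].
  rewrite Rmult_0_r. exact H.
- intro x. apply Rmult_le_pos; [apply Rmult_le_pos; [apply Rlt_le, exp_pos|apply pow2_ge_0]|].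
  apply Rlt_le, Rdiv_lt_0_compat; [apply exp_pos|apply sqrt_lt_R0; pose proof PI_RGT_0; lra].
Qed.

Lemma ex_price_integral a sg : 0 <= a ->
  exists E, is_RInt_R (fun x => exp (- a * exp (sg * x)) * gauss_density x) E.
Proof.
intro Ha. assert (Hsqrt : 1 <= sqrt (2 * PI)).
{ rewrite <- sqrt_1. apply sqrt_le_1_alt. pose proof PI2_1. lra. }
apply ex_is_RInt_R_dominated.
- intro x. apply continuous_of_ex_derive. unfold gauss_density. auto_derive. lra.
- intro x. unfold gauss_density. fold (gauss_kernel x).
  pose proof (gauss_kernel_pos x).
  assert (Hexp : exp (- a * exp (sg * x)) <= 1).
  { rewrite <- exp_0. apply exp_le_compat. pose proof (exp_pos (sg * x)). nra. }
  assert (gauss_kernel x / sqrt (2 * PI) <= gauss_kernel x).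
  { apply (Rmult_le_reg_r (sqrt (2 * PI))); [lra|].
    unfold Rdiv. rewrite Rmult_assoc, Rinv_l by lra. nra. }
  assert (0 <= gauss_kernel x / sqrt (2 * PI)) by (apply Rlt_le, Rdiv_lt_0_compat; lra).
  pose proof (exp_pos (- a * exp (sg * x))). split; nra.
Qed.

Lemma LambertW_spec y : 0 < y -> 0 < LambertW y /\ LambertW y * exp (LambertW y) = y.
Proof.
intro Hy.
assert (Hex : exists x, -1 < x /\ x * exp x = y).
{ assert (Hc : continuity (fun x => x * exp x - y)).
  { apply continuity_minus; [|apply continuity_const; intros ? ?; reflexivity].
    apply continuity_mult; apply derivable_continuous; [apply derivable_id|apply derivable_exp]. }
  destruct (IVT (fun x => x * exp x - y) 0 y Hc Hy) as [z [Hz1 Hz2]].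
  - rewrite exp_0. lra.
  - assert (1 < exp y) by (rewrite <- exp_0; apply exp_increasing, Hy). nra.
  - exists z. split; lra. }
unfold LambertW.
destruct (epsilon_spec (inhabits 0) (fun x => -1 < x /\ x * exp x = y) Hex) as [H1 H2].
set (w := epsilon (inhabits 0) (fun x => -1 < x /\ x * exp x = y)) in *.
split; [|exact H2].
destruct (Rle_or_lt w 0) as [Hw|Hw]; [|exact Hw].
pose proof (exp_pos w). nra.
Qed.

Lemma wfun_spec T r nu mu eta sigma rho s0 lam gam :
  0 < T -> 0 < eta -> 0 < s0 -> 0 < lam -> 0 < gam -> -1 < rho < 1 ->
  let c := wfun T r nu mu eta sigma rho s0 lam gam / (eta ^ 2 * T) in
  0 < c /\
  theta lam gam rho * s0 * exp (drift nu eta rho mu r sigma * T) = c * exp (c * (eta ^ 2 * T)).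
Proof.
intros hT heta hs0 hlam hgam hrho c.
set (a := theta lam gam rho * s0 * exp (drift nu eta rho mu r sigma * T)).
assert (Hv : 0 < eta ^ 2 * T) by (apply Rmult_lt_0_compat; [apply pow_lt|]; lra).
assert (Ha : 0 < a).
{ unfold a, theta. pose proof (exp_pos (drift nu eta rho mu r sigma * T)).
  repeat apply Rmult_lt_0_compat; nra. }
destruct (LambertW_spec (a * (eta ^ 2 * T))) as [Hw Hwe]; [nra|].
replace (LambertW (a * (eta ^ 2 * T))) with (wfun T r nu mu eta sigma rho s0 lam gam)
  in Hw, Hwe by (unfold wfun; f_equal; unfold a; ring).
split; [apply Rdiv_lt_0_compat; lra|].
apply (Rmult_eq_reg_r (eta ^ 2 * T)); [|lra].
unfold c. rewrite <- Hwe. field_simplify_eq; [f_equal; f_equal; field|]; lra.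
Qed.

Lemma price_ratios T r nu mu eta sigma rho s0 lam gam E :
  0 < T -> 0 < eta -> 0 < lam -> 0 < gam -> -1 < rho < 1 ->
  is_RInt_R (fun x => exp (- (theta lam gam rho * s0 * exp (drift nu eta rho mu r sigma * T))
                           * exp (eta * sqrt T * x)) * gauss_density x) E ->
  0 < - ln E ->
  let w := wfun T r nu mu eta sigma rho s0 lam gam in
  let c := w / (eta ^ 2 * T) in
  Dval T r nu mu eta sigma rho s0 lam gam / pval T r nu mu eta sigma rho s0 lam gam
    = c * (1 + w / 2) / - ln E /\
  Gval T r nu mu eta sigma rho s0 lam gam / pval T r nu mu eta sigma rho s0 lam gam
    = c * (exp (eta ^ 2 * T / 2) + w / 2) / - ln E.
Proof.
intros hT heta hlam hgam hrho HE HL w c.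
assert (Hv : 0 < eta ^ 2 * T) by (apply Rmult_lt_0_compat; [apply pow_lt|]; lra).
pose proof (exp_pos (- r * T)).
unfold Dval, Gval, pval, c. fold w.
erewrite gauss_expect_of_is_RInt_R;
  [|refine (is_RInt_R_ext _ _ _ _ _ eq_refl HE); intro x; do 2 f_equal; ring].
replace (eta ^ 2 / 2 * T) with (eta ^ 2 * T / 2) by field.
unfold theta. clearbody w. split; field; repeat split; nra.
Qed.

Lemma price_ratio_bounds c v w Eh L e :
  0 < c -> 0 < v -> w = c * v -> 1 <= Eh -> 0 <= e ->
  c * (1 + w / 2) <= L -> L <= c * (Eh + w / 2) ->
  c * (Eh + w / 2) - c ^ 2 / 2 * e <= L ->
  / Eh <= (1 + w / 2) / (Eh + w / 2)
  /\ (1 + w / 2) / (Eh + w / 2) <= c * (1 + w / 2) / L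
  /\ c * (1 + w / 2) / L <= 1
  /\ 1 <= c * (Eh + w / 2) / L
  /\ c * (Eh + w / 2) / L <= 1 + w * e / (2 * v + v * w)
  /\ 1 + w * e / (2 * v + v * w) <= 1 + e / v.
Proof.
intros hc hv hw hEh he hL1 hL2 hL3.
assert (hw0 : 0 < w) by nra.
assert (hL : 0 < L) by nra.
assert (hvw : 0 < 2 * v + v * w) by nra.
replace (/ Eh) with (1 / Eh) by (field; lra).
replace (1 + w * e / (2 * v + v * w)) with ((2 * v + v * w + w * e) / (2 * v + v * w))
  by (field; lra).
split; [|split; [|split; [|split; [|split]]]].
- apply div_le_div_cross; nra.
- apply div_le_div_cross; nra.
- apply div_le_1; lra.
- apply one_le_div; lra.
- apply div_le_div_cross; [lra|lra|].
  assert (c * (Eh + w / 2) * (2 * v + v * w)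
          <= (2 * v + v * w) * L + c ^ 2 * e * v * (1 + w / 2)) by nra.
  assert (c ^ 2 * e * v * (1 + w / 2) <= w * e * L).
  { replace (c ^ 2 * e * v * (1 + w / 2)) with (w * e * (c * (1 + w / 2)))
      by (rewrite hw; ring).
    apply Rmult_le_compat_l; [nra|exact hL1]. }
  nra.
- replace ((2 * v + v * w + w * e) / (2 * v + v * w)) with (1 + w * e / (2 * v + v * w))
    by (field; lra).
  apply Rplus_le_compat_l, div_le_div_cross; nra.
Qed.

Theorem proposition1 (T r nu mu eta sigma s0 lam gam : R)
  (hT : 0 < T) (heta : 0 < eta) (hsigma : 0 < sigma) (hs0 : 0 < s0)
  (hlam : 0 < lam) (hgam : 0 < gam) :
  forall rho : R, -1 < rho < 1 ->
  let w := wfun T r nu mu eta sigma rho s0 lam gam in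
  let D := Dval T r nu mu eta sigma rho s0 lam gam in
  let G := Gval T r nu mu eta sigma rho s0 lam gam in
  let p := pval T r nu mu eta sigma rho s0 lam gam in
  exp (- (eta ^ 2 * T / 2)) <= (1 + w / 2) / (exp (eta ^ 2 * T / 2) + w / 2)
  /\ (1 + w / 2) / (exp (eta ^ 2 * T / 2) + w / 2) <= D / p
  /\ D / p <= 1
  /\ 1 <= G / p
  /\ G / p <= 1 + w * e2 eta T / (2 * eta ^ 2 * T + eta ^ 2 * T * w)
  /\ 1 + w * e2 eta T / (2 * eta ^ 2 * T + eta ^ 2 * T * w)
       <= 1 + e2 eta T / (eta ^ 2 * T).
Proof.
intros rho hrho w D G p.
destruct (wfun_spec T r nu mu eta sigma rho s0 lam gam) as [Hc Hac]; try assumption.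
fold w in Hc, Hac. set (v := eta ^ 2 * T) in *. set (c := w / v) in *.
set (a := theta lam gam rho * s0 * exp (drift nu eta rho mu r sigma * T)) in Hac.
assert (Hv : 0 < v) by (unfold v; apply Rmult_lt_0_compat; [apply pow_lt|]; lra).
assert (Hw : w = c * v) by (unfold c; field; lra).
destruct (ex_price_integral a (eta * sqrt T)) as [E HE].
{ rewrite Hac. pose proof (exp_pos (c * v)). nra. }
assert (HEc := HE). rewrite Hac in HEc.
destruct (neg_ln_price_integral_bounds eta T c hT Hc E HEc) as [L1 [L2 L3]].
fold v in L1, L2, L3. rewrite <- Hw in L1, L2, L3.
destruct (price_ratios T r nu mu eta sigma rho s0 lam gam E) as [HD HG]; try assumption; [nra|].
fold w v c in HD, HG. fold D p in HD. fold G p in HG. rewrite HD, HG, exp_Ropp.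
replace (2 * eta ^ 2 * T) with (2 * v) by (unfold v; ring).
apply price_ratio_bounds; try assumption.
- rewrite <- exp_0. apply exp_le_compat. lra.
- apply e2_nonneg, hT.
Qed.
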